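(* Let $\Gamma$ be a group generated by a finite set $X$. If $\Gamma$ has solvable Equality Problem on a set $S\times S$, where $S\subset\mathbb F_X$ is UB-generic, then $\Gamma$ has solvable Word Problem.
   Context: $\mathbb F_X$ is the free group on $X$, $\pi:\mathbb F_X\to\Gamma$ the canonical epimorphism, $|\omega|$ the reduced word length, $B_n=\{\omega\in\mathbb F_X:|\omega|\le n\}$. $S\subset\mathbb F_X$ is UB-generic if $\limsup_{n\to\infty}\max_{\omega\in\mathbb F_X}\frac{|S\cap\omega B_n|}{|B_n|}=1$. $\Gamma$ has solvable Word Problem if there is an algorithm deciding for every $\omega\in\mathbb F_X$ whether $\pi(\omega)$ is trivial. $\Gamma$ has solvable Equality Problem on $T\subset\mathbb F_X^2$ if there is a partial algorithm that halts at least on every $(\omega_1,\omega_2)\in T$ and, whenever it halts, correctly decides whether $\pi(\omega_1)=\pi(\omega_2)$. *)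

From mathcomp Require Import all_boot all_order all_algebra.
Set Implicit Arguments. Unset Strict Implicit. Unset Printing Implicit Defensive.
Import Order.TTheory GRing.Theory Num.Theory.

(* A model of computation: (untyped) mu-recursive functions on nat,   *)
(* with a big-step evaluation relation.  "Algorithm" = code.          *)
Inductive code : Type :=
  | CZero : code
  | CSucc : code
  | CProj : nat -> code
  | CComp : code -> seq code -> code
  | CPrim : code -> code -> code
  | CMu   : code -> code.

Inductive eval : code -> seq nat -> nat -> Prop :=
  | ev_zero v : eval CZero v 0
  | ev_succ x v : eval CSucc (x :: v) x.+1
  | ev_proj i v : (i < size v)%N -> eval (CProj i) v (nth 0%N v i)
  | ev_comp f gs v ws y : evals gs v ws -> eval f ws y -> eval (CComp f gs) v y
  | ev_prim0 f g v y : eval f v y -> eval (CPrim f g) (0%N :: v) y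
  | ev_primS f g n v y z :
      eval (CPrim f g) (n :: v) y -> eval g (n :: y :: v) z ->
      eval (CPrim f g) (n.+1 :: v) z
  | ev_mu f v y : eval f (y :: v) 0 ->
      (forall z, (z < y)%N -> exists m, eval f (z :: v) m.+1) ->
      eval (CMu f) v y
with evals : seq code -> seq nat -> seq nat -> Prop :=
  | evs_nil v : evals [::] v [::]
  | evs_cons g gs v w ws : eval g v w -> evals gs v ws -> evals (g :: gs) v (w :: ws).

(* Encoding of sequences of naturals into nat (Cantor pairing). *)
Definition cpair (x y : nat) : nat := ((x + y) * (x + y).+1) %/ 2 + y.
Fixpoint enc_list (s : seq nat) : nat :=
  if s is x :: s' then (cpair x (enc_list s')).+1 else 0%N.

(* The free group F_X on X = 'I_k, as reduced words.                  *)
(* A letter (i, false) is x_i, (i, true) is x_i^{-1}.                 *)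
Definition letter (k : nat) := ('I_k * bool)%type.

Definition cancelp k (a b : letter k) : bool := (a.1 == b.1) && (a.2 != b.2).

Definition reduced k (s : seq (letter k)) : bool :=
  sorted (fun a b => ~~ cancelp a b) s.

Definition push k (a : letter k) (s : seq (letter k)) : seq (letter k) :=
  match s with
  | b :: s' => if cancelp a b then s' else a :: s
  | [::] => [:: a]
  end.

Definition freduce k (s : seq (letter k)) : seq (letter k) := foldr (@push k) [::] s.
Definition fmul k (u v : seq (letter k)) : seq (letter k) := freduce (u ++ v).

Definition words_of_len k (m : nat) : seq (seq (letter k)) :=
  iter m (fun L => [seq a :: s | a <- enum {: letter k}, s <- L]) [:: [::]].

Definition ball k (n : nat) : seq (seq (letter k)) :=
  filter (@reduced k) (flatten [seq words_of_len k m | m <- iota 0 n.+1]).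

Definition tball k (w : seq (letter k)) (n : nat) : seq (seq (letter k)) :=
  undup [seq fmul w v | v <- ball k n].

Local Open Scope ring_scope.

Definition density k (S : pred (seq (letter k))) (w : seq (letter k)) (n : nat) : rat :=
  (count S (tball w n))%:R / (size (ball k n))%:R.

(* limsup_n max_w density = 1.  Since density <= 1 always, this is:
   for every eps > 0 and every N there is n >= N and w in F_X with
   density > 1 - eps. *)
Definition UB_generic k (S : pred (seq (letter k))) : Prop :=
  forall eps : rat, 0 < eps -> forall N : nat,
    exists n : nat, (N <= n)%N /\
      exists w : seq (letter k), reduced w /\ 1 - eps < density S w n.

Local Close Scope ring_scope.

Definition is_group (G : Type) (mul : G -> G -> G) (inv : G -> G) (one : G) : Prop :=
  (forall x y z, mul x (mul y z) = mul (mul x y) z) /\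
  (forall x, mul one x = x) /\
  (forall x, mul (inv x) x = one).

Definition evalw k (G : Type) (mul : G -> G -> G) (inv : G -> G) (one : G)
  (gen : 'I_k -> G) (w : seq (letter k)) : G :=
  foldr (fun a g => mul (if a.2 then inv (gen a.1) else gen a.1) g) one w.

Definition generates k (G : Type) (mul : G -> G -> G) (inv : G -> G) (one : G)
  (gen : 'I_k -> G) : Prop :=
  forall g : G, exists w : seq (letter k), reduced w /\ evalw mul inv one gen w = g.

Definition enc_letter k (a : letter k) : nat := ((a.1 : nat).*2 + a.2)%N.
Definition enc_word k (w : seq (letter k)) : nat := enc_list (map (@enc_letter k) w).

Definition solvable_WP k (G : Type) (mul : G -> G -> G) (inv : G -> G) (one : G)
  (gen : 'I_k -> G) : Prop :=
  exists c : code, forall w : seq (letter k), reduced w ->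
    (evalw mul inv one gen w = one -> eval c [:: enc_word w] 1) /\
    (evalw mul inv one gen w <> one -> eval c [:: enc_word w] 0).

Definition solvable_EqP_on k (G : Type) (mul : G -> G -> G) (inv : G -> G) (one : G)
  (gen : 'I_k -> G) (T : seq (letter k) -> seq (letter k) -> Prop) : Prop :=
  exists c : code,
    (forall w1 w2, reduced w1 -> reduced w2 -> T w1 w2 ->
       exists b, eval c [:: enc_word w1; enc_word w2] b) /\
    (forall w1 w2 b, reduced w1 -> reduced w2 ->
       eval c [:: enc_word w1; enc_word w2] b ->
       (evalw mul inv one gen w1 = evalw mul inv one gen w2 -> b = 1%N) /\
       (evalw mul inv one gen w1 <> evalw mul inv one gen w2 -> b = 0%N)).

(* Given a word w, enumerate pairs (v, t), run the equality algorithm for t steps on (v, v w)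
   and output its answer at the first pair where it halts.  Since pi(v) = pi(v w) iff
   pi(w) = 1 and the algorithm is correct whenever it halts, the answer is right.  The search
   stops because some v has v, v w in S: if S fills more than a 1 - 1/(2C) share of a translate
   u B_n, where C = (2|X| + 1)^|w|, then L = u B_(n - |w|) satisfies |B_n| <= C |L|, and since L
   and L w both lie in u B_n, fewer than |L| elements x of L have x or x w outside S.
   Turning the search into a mu-recursive code needs an interpreter with a step bound, which
   for a fixed code is primitive recursive, and free reduction on Cantor-encoded words. *)

From mathcomp Require Import all_boot all_order all_algebra zify lra.
Set Implicit Arguments. Unset Strict Implicit. Unset Printing Implicit Defensive.

(** * Computable functions *)

Definition computes (c : code) (n : nat) (F : seq nat -> nat) : Prop :=
  forall v, size v = n -> eval c v (F v).

Definition arg (v : seq nat) (i : nat) : nat := nth 0 v i.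

Definition computes1 c (op : nat -> nat) := computes c 1 (fun v => op (arg v 0)).
Definition computes2 c (op : nat -> nat -> nat) :=
  computes c 2 (fun v => op (arg v 0) (arg v 1)).
Definition computes3 c (op : nat -> nat -> nat -> nat) :=
  computes c 3 (fun v => op (arg v 0) (arg v 1) (arg v 2)).

Lemma computes_ext c n F G : (forall v, size v = n -> F v = G v) ->
  computes c n F -> computes c n G.
Proof. by move=> FG cF v sv; rewrite -FG //; apply: cF. Qed.

Lemma computes_comp f m F cs n (W : seq nat -> seq nat) : computes f m F ->
  (forall v, size v = n -> evals cs v (W v) /\ size (W v) = m) ->
  computes (CComp f cs) n (fun v => F (W v)).
Proof. by move=> cf cW v sv; have [ev sW] := cW v sv; apply: ev_comp ev (cf _ sW). Qed.

Lemma computes_proj i n : i < n -> computes (CProj i) n (arg^~ i).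
Proof. by move=> ltin v sv; apply: ev_proj; rewrite sv. Qed.

Fixpoint Cconst (c : nat) : code :=
  if c is c'.+1 then CComp CSucc [:: Cconst c'] else CZero.

Lemma computes_const c n : computes (Cconst c) n (fun=> c).
Proof.
elim: c => [|c IHc] v sv /=; first exact: ev_zero.
by apply: ev_comp (ev_succ _ _); apply: evs_cons (IHc _ sv) (evs_nil _).
Qed.

Lemma computes_succ g n G : computes g n G ->
  computes (CComp CSucc [:: g]) n (fun v => (G v).+1).
Proof. by move=> cg v sv; apply: ev_comp (ev_succ _ _); apply: evs_cons (cg _ sv) (evs_nil _). Qed.

Fixpoint primrec (F G : seq nat -> nat) (x : nat) (v : seq nat) : nat :=
  if x is x'.+1 then G (x' :: primrec F G x' v :: v) else F v.

Lemma computes_prim f g n F G : computes f n F -> computes g n.+2 G ->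
  computes (CPrim f g) n.+1 (fun v => primrec F G (head 0 v) (behead v)).
Proof.
move=> cf cg [|x v] //= [sv]; elim: x => [|x IHx] /=; first exact/ev_prim0/cf.
by apply: ev_primS IHx _; apply: cg => /=; rewrite sv.
Qed.

Lemma computes_app1 f op g n G : computes1 f op -> computes g n G ->
  computes (CComp f [:: g]) n (fun v => op (G v)).
Proof.
move=> cf cg; apply: (computes_comp (W := fun v => [:: G v])) cf _ => v sv.
by split=> //; apply: evs_cons (cg _ sv) (evs_nil _).
Qed.

Lemma computes_app2 f op g h n G H : computes2 f op -> computes g n G -> computes h n H ->
  computes (CComp f [:: g; h]) n (fun v => op (G v) (H v)).
Proof.
move=> cf cg ch; apply: (computes_comp (W := fun v => [:: G v; H v])) cf _ => v sv.
by split=> //; apply: evs_cons (cg _ sv) (evs_cons (ch _ sv) (evs_nil _)).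
Qed.

Lemma computes_app3 f op g h i n G H I : computes3 f op ->
  computes g n G -> computes h n H -> computes i n I ->
  computes (CComp f [:: g; h; i]) n (fun v => op (G v) (H v) (I v)).
Proof.
move=> cf cg ch ci; apply: (computes_comp (W := fun v => [:: G v; H v; I v])) cf _ => v sv.
by split=> //; apply: evs_cons (cg _ sv) (evs_cons (ch _ sv) (evs_cons (ci _ sv) (evs_nil _))).
Qed.

Notation P0 := (CProj 0).
Notation P1 := (CProj 1).
Notation P2 := (CProj 2).

Definition Cpred := CPrim CZero P0.
Lemma computes_pred : computes1 Cpred predn.
Proof.
have := computes_prim (@computes_const 0 0) (computes_proj (isT : 0 < 2)).
by apply: computes_ext => -[|[|x] []].
Qed.

Definition Cadd := CPrim P0 (CComp CSucc [:: P1]).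
Lemma computes_add : computes2 Cadd addn.
Proof.
have := computes_prim (computes_proj (isT : 0 < 1)) (computes_succ (computes_proj (isT : 1 < 3))).
apply: computes_ext => -[|x [|y []]] //= _; rewrite /arg /=.
by elim: x => //= x ->.
Qed.

Definition Cmul := CPrim CZero (CComp Cadd [:: P1; P2]).
Lemma computes_mul : computes2 Cmul muln.
Proof.
have := computes_prim (@computes_const 0 1)
  (computes_app2 computes_add (computes_proj (isT : 1 < 3)) (computes_proj (isT : 2 < 3))).
apply: computes_ext => -[|x [|y []]] //= _; rewrite /arg /=.
by elim: x => //= x ->; rewrite mulSn addnC.
Qed.

Definition Csub := CComp (CPrim P0 (CComp Cpred [:: P1])) [:: P1; P0].
Lemma computes_sub : computes2 Csub subn.
Proof.
have subr : computes2 (CPrim P0 (CComp Cpred [:: P1])) (fun y x => x - y).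
  have := computes_prim (computes_proj (isT : 0 < 1))
    (computes_app1 computes_pred (computes_proj (isT : 1 < 3))).
  apply: computes_ext => -[|y [|x []]] //= _; rewrite /arg /=.
  by elim: y => //= [|y ->]; rewrite ?subn0 ?subnS.
exact: computes_app2 subr (computes_proj (isT : 1 < 2)) (computes_proj (isT : 0 < 2)).
Qed.

Definition Ceq0 := CPrim (Cconst 1) CZero.
Lemma computes_eq0 : computes1 Ceq0 (fun x => nat_of_bool (x == 0)).
Proof.
have := computes_prim (@computes_const 1 0) (@computes_const 0 2).
by apply: computes_ext => -[|[|x] []].
Qed.

Definition Cneq0 := CComp Ceq0 [:: Ceq0].
Lemma computes_neq0 : computes1 Cneq0 (fun x => nat_of_bool (x != 0)).
Proof.
have := computes_app1 computes_eq0 computes_eq0.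
by apply: computes_ext => -[|[|x] []].
Qed.

Definition Cif (C A B : code) :=
  CComp Cadd [:: CComp Cmul [:: CComp Cneq0 [:: C]; A]; CComp Cmul [:: CComp Ceq0 [:: C]; B]].
Lemma computes_if C A B n FC FA FB : computes C n FC -> computes A n FA -> computes B n FB ->
  computes (Cif C A B) n (fun v => if FC v != 0 then FA v else FB v).
Proof.
move=> cC cA cB.
have := computes_app2 computes_add (computes_app2 computes_mul (computes_app1 computes_neq0 cC) cA)
  (computes_app2 computes_mul (computes_app1 computes_eq0 cC) cB).
by apply: computes_ext => v _; case: (FC v); rewrite /= ?mul0n ?mul1n ?addn0.
Qed.

Definition Cleq (A B : code) := CComp Ceq0 [:: CComp Csub [:: A; B]].
Lemma computes_leq A B n FA FB : computes A n FA -> computes B n FB ->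
  computes (Cleq A B) n (fun v => nat_of_bool (FA v <= FB v)).
Proof.
move=> cA cB; have := computes_app1 computes_eq0 (computes_app2 computes_sub cA cB).
by apply: computes_ext => v _; rewrite subn_eq0.
Qed.

Definition Ceqn (A B : code) := CComp Cmul [:: Cleq A B; Cleq B A].
Lemma computes_eqn A B n FA FB : computes A n FA -> computes B n FB ->
  computes (Ceqn A B) n (fun v => nat_of_bool (FA v == FB v)).
Proof.
move=> cA cB; have := computes_app2 computes_mul (computes_leq cA cB) (computes_leq cB cA).
apply: computes_ext => v _; rewrite eqn_leq.
by case: (FA v <= FB v); case: (FB v <= FA v).
Qed.

(** * Cantor pairing and encoded sequences *)

Fixpoint tri s := if s is s'.+1 then tri s' + s else 0.

Lemma tri_ge s : s <= tri s.
Proof. by elim: s => //= s; lia. Qed.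

Lemma leq_tri a b : a <= b -> tri a <= tri b.
Proof. by move/subnK <-; elim: (b - a) => //= d; lia. Qed.

Lemma tri_double s : tri s * 2 = s * s.+1.
Proof. by elim: s => //= s IHs; rewrite mulnDl IHs; lia. Qed.

Lemma cpairE x y : cpair x y = tri (x + y) + y.
Proof. by rewrite /cpair -tri_double mulnK. Qed.

(* [diag n] is the [s] with [tri s <= n < tri s.+1], i.e. the Cantor diagonal through [n]. *)
Definition diag n := count (fun j => tri j.+1 <= n) (iota 0 n).
Definition unpair2 n := n - tri (diag n).
Definition unpair1 n := diag n - unpair2 n.

Lemma diag_tri n s : tri s <= n < tri s.+1 -> diag n = s.
Proof.
move=> /andP [le_sn /= lt_ns]; rewrite /diag.
have below : {in iota 0 n, (fun j => tri j.+1 <= n) =1 (fun j => j < 0 + s)}.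
  move=> j _ /=; rewrite add0n; apply/idP/idP.
    by apply: contraLR; rewrite -leqNgt -ltnNge => le_sj; have /= := leq_tri le_sj; lia.
  by move/leq_tri => /=; lia.
rewrite (eq_in_count below) -size_filter filter_iota_ltn ?size_iota //.
by have := tri_ge s; lia.
Qed.

Lemma tri_exists n : exists s, tri s <= n < tri s.+1.
Proof.
elim: n => [|n [s /andP [le_sn lt_ns]]]; first by exists 0.
case: (ltnP n.+1 (tri s.+1)) => lt_n1; first by exists s; lia.
by exists s.+1; move: lt_n1 lt_ns => /=; lia.
Qed.

Lemma unpair1_cpair x y : unpair1 (cpair x y) = x.
Proof. by rewrite /unpair1 /unpair2 cpairE (@diag_tri _ (x + y)) /=; lia. Qed.

Lemma unpair2_cpair x y : unpair2 (cpair x y) = y.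
Proof. by rewrite /unpair2 cpairE (@diag_tri _ (x + y)) /=; lia. Qed.

Lemma cpair_unpair n : cpair (unpair1 n) (unpair2 n) = n.
Proof.
have [s les] := tri_exists n; rewrite cpairE /unpair1 /unpair2 (diag_tri les).
by move: les => /andP [le_sn /= lt_ns]; rewrite subnK; lia.
Qed.

Definition hdN n := unpair1 n.-1.
Definition tlN n := unpair2 n.-1.
Definition consN x s := (cpair x s).+1.

Lemma enc_list_cons x l : enc_list (x :: l) = consN x (enc_list l).
Proof. by []. Qed.

Lemma hdN_cons x s : hdN (consN x s) = x.
Proof. exact: unpair1_cpair. Qed.

Lemma tlN_cons x s : tlN (consN x s) = s.
Proof. exact: unpair2_cpair. Qed.

Lemma size_le_enc_list l : size l <= enc_list l.
Proof. by elim: l => //= x l; rewrite cpairE; lia. Qed.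

Lemma enc_list_surj n : exists l, enc_list l = n.
Proof.
elim: n {-2}n (leqnn n) => [|N IHN] [|n] le_nN; try by exists [::].
have [l El] := IHN (unpair2 n) (leq_trans (leq_subr (tri (diag n)) n) le_nN).
by exists (unpair1 n :: l); rewrite /= El cpair_unpair.
Qed.

Definition Ctri := CPrim CZero (CComp Cadd [:: P1; CComp CSucc [:: P0]]).
Lemma computes_tri : computes1 Ctri tri.
Proof.
have := computes_prim (@computes_const 0 0) (computes_app2 computes_add
  (computes_proj (isT : 1 < 2)) (computes_succ (computes_proj (isT : 0 < 2)))).
apply: computes_ext => -[|x []] //= _; rewrite /arg /=.
by elim: x => //= x ->.
Qed.

Definition Cdiag_scan :=
  CPrim CZero (CComp Cadd [:: P1; Cleq (CComp Ctri [:: CComp CSucc [:: P0]]) P2]).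
Definition Cdiag := CComp Cdiag_scan [:: P0; P0].
Lemma computes_diag : computes1 Cdiag diag.
Proof.
have scan : computes2 Cdiag_scan (fun j n => count (fun j => tri j.+1 <= n) (iota 0 j)).
  have := computes_prim (@computes_const 0 1) (computes_app2 computes_add
    (computes_proj (isT : 1 < 3)) (computes_leq (computes_app1 computes_tri
      (computes_succ (computes_proj (isT : 0 < 3)))) (computes_proj (isT : 2 < 3)))).
  apply: computes_ext => -[|j [|n []]] //= _; rewrite /arg /=.
  by elim: j => // j IHj; rewrite [LHS]/= IHj -addn1 iotaD count_cat /= addn0 add0n addn1.
exact: computes_app2 scan (computes_proj (isT : 0 < 1)) (computes_proj (isT : 0 < 1)).
Qed.

Definition Cunpair2 := CComp Csub [:: P0; CComp Ctri [:: Cdiag]].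
Lemma computes_unpair2 : computes1 Cunpair2 unpair2.
Proof.
exact: computes_app2 computes_sub (computes_proj _) (computes_app1 computes_tri computes_diag).
Qed.

Definition Cunpair1 := CComp Csub [:: Cdiag; Cunpair2].
Lemma computes_unpair1 : computes1 Cunpair1 unpair1.
Proof. exact: computes_app2 computes_sub computes_diag computes_unpair2. Qed.

Definition Chd := CComp Cunpair1 [:: Cpred].
Lemma computes_hd : computes1 Chd hdN.
Proof. exact: computes_app1 computes_unpair1 computes_pred. Qed.

Definition Ctl := CComp Cunpair2 [:: Cpred].
Lemma computes_tl : computes1 Ctl tlN.
Proof. exact: computes_app1 computes_unpair2 computes_pred. Qed.

Definition Ccons := CComp CSucc [:: CComp Cadd [:: CComp Ctri [:: CComp Cadd [:: P0; P1]]; P1]].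
Lemma computes_cons : computes2 Ccons consN.
Proof.
have := computes_succ (computes_app2 computes_add (computes_app1 computes_tri
  (computes_app2 computes_add (computes_proj (isT : 0 < 2)) (computes_proj (isT : 1 < 2))))
  (computes_proj (isT : 1 < 2))).
by apply: computes_ext => v _; rewrite /consN cpairE.
Qed.

(** * Free reduction of encoded words *)

Definition Codd := CPrim CZero (CComp Ceq0 [:: P1]).
Lemma computes_odd : computes1 Codd (fun x => nat_of_bool (odd x)).
Proof.
have := computes_prim (@computes_const 0 0)
  (computes_app1 computes_eq0 (computes_proj (isT : 1 < 2))).
apply: computes_ext => -[|x []] //= _; rewrite /arg /=.
by elim: x => //= x ->; case: (odd x).
Qed.

Definition Chalf := CPrim CZero (CComp Cadd [:: P1; CComp Codd [:: P0]]).
Lemma computes_half : computes1 Chalf half.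
Proof.
have := computes_prim (@computes_const 0 0) (computes_app2 computes_add
  (computes_proj (isT : 1 < 2)) (computes_app1 computes_odd (computes_proj (isT : 0 < 2)))).
apply: computes_ext => -[|x []] //= _; rewrite /arg /=.
by elim: x => //= x ->; rewrite uphalf_half addnC.
Qed.

Definition cancelN x y := (x./2 == y./2) && (x != y).
Definition Ccancel :=
  CComp Cmul [:: Ceqn (CComp Chalf [:: P0]) (CComp Chalf [:: P1]); CComp Ceq0 [:: Ceqn P0 P1]].
Lemma computes_cancel : computes2 Ccancel (fun x y => nat_of_bool (cancelN x y)).
Proof.
have := computes_app2 computes_mul (computes_eqn
    (computes_app1 computes_half (computes_proj (isT : 0 < 2)))
    (computes_app1 computes_half (computes_proj (isT : 1 < 2))))
  (computes_app1 computes_eq0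
    (computes_eqn (computes_proj (isT : 0 < 2)) (computes_proj (isT : 1 < 2)))).
by apply: computes_ext => v _; rewrite /cancelN; case: (arg v 0 == arg v 1); case: (_ == _).
Qed.

Definition pushN x acc := if (acc != 0) && cancelN x (hdN acc) then tlN acc else consN x acc.
Definition Cpush :=
  Cif (CComp Cmul [:: CComp Cneq0 [:: P1]; CComp Ccancel [:: P0; CComp Chd [:: P1]]])
    (CComp Ctl [:: P1]) (CComp Ccons [:: P0; P1]).
Lemma computes_push : computes2 Cpush pushN.
Proof.
have := computes_if (computes_app2 computes_mul
    (computes_app1 computes_neq0 (computes_proj (isT : 1 < 2)))
    (computes_app2 computes_cancel (computes_proj (isT : 0 < 2))
      (computes_app1 computes_hd (computes_proj (isT : 1 < 2)))))
  (computes_app1 computes_tl (computes_proj (isT : 1 < 2)))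
  (computes_app2 computes_cons (computes_proj (isT : 0 < 2)) (computes_proj (isT : 1 < 2))).
by apply: computes_ext => v _; rewrite /pushN; case: (arg v 1 != 0); case: (cancelN _ _).
Qed.

Definition Cmin K := Cif (Cleq P0 (Cconst K)) P0 (Cconst K).
Lemma computes_min K : computes1 (Cmin K) (minn^~ K).
Proof.
have := computes_if (computes_leq (computes_proj (isT : 0 < 1)) (@computes_const K 1))
  (computes_proj (isT : 0 < 1)) (@computes_const K 1).
by apply: computes_ext => v _; rewrite /minn; case: ltngtP => // ->.
Qed.

Definition Ctails := CPrim P0 (CComp Ctl [:: P1]).
Lemma computes_tails : computes2 Ctails (fun j r => iter j tlN r).
Proof.
have := computes_prim (computes_proj (isT : 0 < 1))
  (computes_app1 computes_tl (computes_proj (isT : 1 < 3))).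
apply: computes_ext => -[|j [|r []]] //= _; rewrite /arg /=.
by elim: j => //= j ->.
Qed.

Fixpoint fredN K j r acc :=
  if j is j'.+1 then
    let s := iter j' tlN r in
    if s != 0 then pushN (minn (hdN s) K) (fredN K j' r acc) else fredN K j' r acc
  else acc.

Definition Cfred K :=
  CPrim P1 (Cif (CComp Ctails [:: P0; P2])
    (CComp Cpush [:: CComp (Cmin K) [:: CComp Chd [:: CComp Ctails [:: P0; P2]]]; P1]) P1).
Lemma computes_fred K : computes3 (Cfred K) (fredN K).
Proof.
have tails :=
  computes_app2 computes_tails (computes_proj (isT : 0 < 4)) (computes_proj (isT : 2 < 4)).
have := computes_prim (computes_proj (isT : 1 < 2)) (computes_if tails (computes_app2 computes_push
  (computes_app1 (computes_min K) (computes_app1 computes_hd tails)) (computes_proj (isT : 1 < 4)))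
  (computes_proj (isT : 1 < 4))).
apply: computes_ext => -[|j [|r [|acc []]]] //= _; rewrite /arg /=.
by elim: j => //= j ->.
Qed.

Lemma tails_enc j l : iter j tlN (enc_list l) = enc_list (drop j l).
Proof.
elim: j l => [|j IHj] l; first by rewrite drop0.
rewrite iterSr; case: l => [|x l]; first exact: (IHj [::]).
by rewrite enc_list_cons tlN_cons IHj.
Qed.

Lemma fredN_enc K j l acc :
  fredN K j (enc_list l) acc = foldr pushN acc (rev (map (minn^~ K) (take j l))).
Proof.
elim: j => [|j IHj] /=; first by rewrite take0.
rewrite tails_enc IHj; case: (ltnP j (size l)) => [lt_jl | le_lj].
  by rewrite (take_nth 0 lt_jl) map_rcons rev_rcons (drop_nth 0 lt_jl) /= hdN_cons.
by rewrite drop_oversize //= !take_oversize // ltnW.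
Qed.

Lemma fredN_enc_size K l acc :
  fredN K (enc_list l) (enc_list l) acc = foldr pushN acc (rev (map (minn^~ K) l)).
Proof. by rewrite fredN_enc take_oversize // size_le_enc_list. Qed.

Section EncodedWords.
Variable k : nat.
Implicit Types (a b : letter k) (s t : seq (letter k)).

Definition letter_bound := k.*2.-1.

Lemma enc_letter_le a : enc_letter a <= letter_bound.
Proof. by case: a => [i []]; rewrite /enc_letter /letter_bound /=; have := ltn_ord i; lia. Qed.

Lemma cancelN_enc a b : cancelN (enc_letter a) (enc_letter b) = cancelp a b.
Proof.
case: a b => [i x] [j y]; rewrite /cancelN /cancelp /enc_letter /= !(addnC _.*2) !half_bit_double.
case: (eqVneq i j) => [->|neq_ij]; first by rewrite eqxx eqn_add2r; case: x; case: y.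
by move: neq_ij; rewrite -val_eqE => /negbTE ->.
Qed.

Lemma enc_word_push a s : enc_word (push a s) = pushN (enc_letter a) (enc_word s).
Proof.
case: s => [|b s] //; rewrite /enc_word /= /pushN -/(consN (enc_letter b) _) hdN_cons tlN_cons.
rewrite cancelN_enc.
by case: (cancelp a b).
Qed.

Lemma enc_word_foldr t s :
  enc_word (foldr (@push k) t s) = foldr pushN (enc_word t) (map (@enc_letter k) s).
Proof. by elim: s => //= a s <-; rewrite enc_word_push. Qed.

Lemma fredN_enc_word s t (r := enc_list (rev (map (@enc_letter k) s))) :
  fredN letter_bound r r (enc_word t) = enc_word (foldr (@push k) t s).
Proof.
rewrite fredN_enc_size map_rev revK enc_word_foldr; congr foldr.
by apply: map_id_in => _ /mapP [a _ ->]; apply/minn_idPl/enc_letter_le.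
Qed.

End EncodedWords.

Definition dec_letter k (x : nat) : letter k.+1 := (inord x./2, odd x).

Lemma enc_dec_letter k x : x <= letter_bound k.+1 -> enc_letter (dec_letter k x) = x.
Proof.
rewrite /letter_bound /enc_letter /dec_letter /= => le_xK.
rewrite inordK; first by rewrite addnC odd_double_half.
by rewrite ltnS; have := odd_double_half x; case: (odd x) => /=; lia.
Qed.

Lemma fredN_dec k r : exists s : seq (letter k.+1),
  forall t, fredN (letter_bound k.+1) r r (enc_word t) = enc_word (foldr (@push _) t s).
Proof.
have [l <-] := enc_list_surj r.
exists (rev (map (fun x => dec_letter k (minn x (letter_bound k.+1))) l)) => t.
rewrite fredN_enc_size enc_word_foldr map_rev -map_comp; congr (foldr _ _ (rev _)).
by apply: eq_map => x /=; rewrite enc_dec_letter // geq_minr.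
Qed.

(** * A step-bounded interpreter *)

Definition enc_opt (o : option nat) : nat := if o is Some y then y.+1 else 0.

Fixpoint primrec_opt (F G : seq nat -> option nat) (x : nat) (v : seq nat) : option nat :=
  if x is x'.+1 then
    if primrec_opt F G x' v is Some y then G (x' :: y :: v) else None
  else F v.

(* [mu_scan R j] inspects [R 0], ..., [R j.-1] up to the first one that is not a positive value:
   it is [0] if there is none, [1] if that one is undefined, and [z.+2] if it is [R z = Some 0]. *)
Fixpoint mu_scan (R : nat -> option nat) (j : nat) : nat :=
  if j is j'.+1 then
    let s := mu_scan R j' in
    if s != 0 then s else
      match R j' with None => 1 | Some 0 => j'.+2 | Some _ => 0 end
  else 0.

Definition mu_result (s : nat) : option nat := if s is z.+2 then Some z else None.

Fixpoint run (t : nat) (f : code) (v : seq nat) {struct f} : option nat :=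
  match f with
  | CZero => Some 0
  | CSucc => if v is x :: _ then Some x.+1 else None
  | CProj i => if i < size v then Some (nth 0 v i) else None
  | CComp f gs =>
      let os := map (fun g => run t g v) gs in
      if all isSome os then run t f (map (odflt 0) os) else None
  | CPrim f g => if v is x :: v' then primrec_opt (run t f) (run t g) x v' else None
  | CMu f => mu_result (mu_scan (fun j => run t f (j :: v)) t)
  end.

Fixpoint all_prop (P : code -> Prop) (gs : seq code) : Prop :=
  if gs is g :: gs' then P g /\ all_prop P gs' else True.

Lemma all_prop_impl (P Q : code -> Prop) gs :
  (forall g, P g -> Q g) -> all_prop P gs -> all_prop Q gs.
Proof. by move=> PQ; elim: gs => //= g gs IHgs [Pg Pgs]; split; [apply: PQ | apply: IHgs]. Qed.

Section CodeNestedInd.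
Variable P : code -> Prop.
Hypothesis P_zero : P CZero.
Hypothesis P_succ : P CSucc.
Hypothesis P_proj : forall i, P (CProj i).
Hypothesis P_comp : forall f gs, P f -> all_prop P gs -> P (CComp f gs).
Hypothesis P_prim : forall f g, P f -> P g -> P (CPrim f g).
Hypothesis P_mu : forall f, P f -> P (CMu f).

Fixpoint code_nested_ind (f : code) : P f :=
  match f with
  | CZero => P_zero
  | CSucc => P_succ
  | CProj i => P_proj i
  | CComp f gs => P_comp (code_nested_ind f)
      ((fix all_ind (gs : seq code) : all_prop P gs :=
         if gs is g :: gs' then conj (code_nested_ind g) (all_ind gs') else I) gs)
  | CPrim f g => P_prim (code_nested_ind f) (code_nested_ind g)
  | CMu f => P_mu (code_nested_ind f)
  end.

End CodeNestedInd.

Lemma mu_scan_spec (R : nat -> option nat) j :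
  (mu_scan R j = 0 -> forall z, z < j -> exists m, R z = Some m.+1) /\
  (forall z, mu_scan R j = z.+2 ->
     R z = Some 0 /\ forall z', z' < z -> exists m, R z' = Some m.+1).
Proof.
elim: j => [|j [IH0 IH2]] /=; first by split=> // z.
case: (boolP (mu_scan R j != 0)) => [scan_neq0 | /negPn/eqP scan0].
  by split=> [scan0|]; [rewrite scan0 in scan_neq0 | exact: IH2].
case Rj: (R j) => [[|m]|]; split => //.
- by move=> z [<-]; split=> // z' lt_z'j; apply: IH0.
- move=> _ z; rewrite ltnS leq_eqVlt => /predU1P [->|lt_zj]; first by exists m.
  exact: IH0.
Qed.

Lemma mu_scan_root (R : nat -> option nat) y :
  R y = Some 0 -> (forall z, z < y -> exists m, R z = Some m.+1) ->
  forall j, mu_scan R j = if j <= y then 0 else y.+2.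
Proof.
move=> Ry0 Rpos; elim=> [|j IHj] //=; rewrite IHj.
case: (ltngtP j y) => [lt_jy | // | ->]; last by rewrite Ry0.
by have [m ->] := Rpos j lt_jy.
Qed.

Lemma evals_of_run t gs v :
  all_prop (fun g => forall v y, run t g v = Some y -> eval g v y) gs ->
  all isSome (map (fun g => run t g v) gs) ->
  evals gs v (map (odflt 0) (map (fun g => run t g v) gs)).
Proof.
elim: gs => [|g gs IHgs] /= => [_ _ | [sound_g sound_gs] /andP [def_g def_gs]].
  exact: evs_nil.
apply: evs_cons (IHgs sound_gs def_gs).
by case: (run t g v) def_g (sound_g v) => // y _; apply.
Qed.

Theorem run_sound t f v y : run t f v = Some y -> eval f v y.
Proof.
elim/code_nested_ind: f v y.
- by move=> v y [<-]; apply: ev_zero.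
- by move=> [|x v] y //= [<-]; apply: ev_succ.
- by move=> i v y /=; case: ifP => // lt_iv [<-]; apply: ev_proj.
- move=> f gs IHf IHgs v y /=; case: ifP => // def_gs /IHf.
  exact/ev_comp/evals_of_run.
- move=> f g IHf IHg [|x v] y //=.
  elim: x y => [|x IHx] y /=; first by move/IHf; apply: ev_prim0.
  case rec_x: (primrec_opt _ _ x v) => [z|] // /IHg.
  exact: ev_primS (IHx _ rec_x).
- move=> f IHf v y /=.
  case scan_t: (mu_scan _ t) => [|[|z]] //= [<-].
  have [Rz0 Rpos] := (mu_scan_spec (fun j => run t f (j :: v)) t).2 _ scan_t.
  apply: ev_mu (IHf _ _ Rz0) _ => z' lt_z'z.
  by have [m /IHf] := Rpos z' lt_z'z; exists m.
Qed.

Definition eventually (P : nat -> Prop) : Prop := exists t0, forall t, t0 <= t -> P t.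

Lemma eventually_and (P Q : nat -> Prop) :
  eventually P -> eventually Q -> eventually (fun t => P t /\ Q t).
Proof.
move=> [t1 P1] [t2 Q2]; exists (maxn t1 t2) => t; rewrite geq_max => /andP [le1 le2].
by split; [apply: P1 | apply: Q2].
Qed.

Lemma eventually_forall_lt (P : nat -> nat -> Prop) y :
  (forall z, z < y -> eventually (P z)) -> eventually (fun t => forall z, z < y -> P z t).
Proof.
elim: y => [|y IHy] evP; first by exists 0.
have [t0 Pt] := eventually_and (IHy (fun z lt_zy => evP z (ltnW lt_zy))) (evP y (ltnSn y)).
exists t0 => t le_t z; rewrite ltnS leq_eqVlt => /predU1P [->|]; first exact: (Pt t le_t).2.
exact: (Pt t le_t).1.
Qed.

Lemma run_mu_eventually f v y :
  eventually (fun t => run t f (y :: v) = Some 0) ->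
  (forall z, z < y -> exists m, eventually (fun t => run t f (z :: v) = Some m.+1)) ->
  eventually (fun t => run t (CMu f) v = Some y).
Proof.
move=> ev_root ev_pos.
have ev_all : eventually (fun t => forall z, z < y -> exists m, run t f (z :: v) = Some m.+1).
  apply: eventually_forall_lt => z /ev_pos [m [t0 run_m]].
  by exists t0 => t le_t; exists m; apply: run_m.
have [t0 after_t0] := eventually_and ev_root ev_all.
exists (maxn t0 y.+1) => t; rewrite geq_max => /andP [le_t0 lt_yt] /=.
have [root pos] := after_t0 t le_t0.
by rewrite (mu_scan_root root pos) leqNgt lt_yt.
Qed.

Fixpoint eval_run_eventually f v y (ev : eval f v y) {struct ev} :
  eventually (fun t => run t f v = Some y)
with evals_run_eventually gs v ws (ev : evals gs v ws) {struct ev} :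
  eventually (fun t => map (fun g => run t g v) gs = map Some ws).
Proof.
- case: ev => {f v y} [v | x v | i v lt_iv | f gs v ws y ev_gs ev_f | f g v y ev_f
                       | f g n v y z ev_n ev_g | f v y ev_root ev_pos].
  + by exists 0.
  + by exists 0.
  + by exists 0 => t _ /=; rewrite lt_iv.
  + have [t0 after_t0] := eventually_and (evals_run_eventually _ _ _ ev_gs)
      (eval_run_eventually _ _ _ ev_f).
    exists t0 => t /after_t0 [run_gs run_f] /=.
    by rewrite run_gs all_map (@eq_all _ _ predT) ?all_predT // -map_comp map_id_in.
  + exact: eval_run_eventually _ _ _ ev_f.
  + have [t0 after_t0] := eventually_and (eval_run_eventually _ _ _ ev_n)
      (eval_run_eventually _ _ _ ev_g).
    by exists t0 => t /after_t0 [/= run_n run_g]; rewrite run_n.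
  + apply: run_mu_eventually (eval_run_eventually _ _ _ ev_root) _ => z /ev_pos [m ev_m].
    by exists m; apply: eval_run_eventually _ _ _ ev_m.
- case: ev => {gs v ws} [v | g gs v w ws ev_g ev_gs]; first by exists 0.
  have [t0 after_t0] := eventually_and (eval_run_eventually _ _ _ ev_g)
    (evals_run_eventually _ _ _ ev_gs).
  by exists t0 => t /after_t0 [/= -> ->].
Qed.

Fixpoint Cguard (cs : seq code) (final : code) : code :=
  if cs is c :: cs' then Cif c (Cguard cs' final) CZero else final.

Definition Cprojs a b := [seq CProj i | i <- iota a b].

Definition Cmu_step (Cf : code) n :=
  let o := CComp Cf (P0 :: Cprojs 2 n.+1) in
  Cif P1 P1
    (Cif o (Cif (Ceqn o (Cconst 1)) (CComp CSucc [:: CComp CSucc [:: P0]]) CZero) (Cconst 1)).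

(* [Crun f n] takes [n] arguments followed by a step bound. *)
Fixpoint Crun (f : code) (n : nat) {struct f} : code :=
  match f with
  | CZero => Cconst 1
  | CSucc => if n is _.+1 then CComp CSucc [:: CComp CSucc [:: P0]] else CZero
  | CProj i => if i < n then CComp CSucc [:: CProj i] else CZero
  | CComp f gs => Cguard (map (Crun^~ n) gs)
      (CComp (Crun f (size gs)) (rcons (map (fun g => CComp Cpred [:: Crun g n]) gs) (CProj n)))
  | CPrim f g => if n is m.+1 then CPrim (Crun f m)
        (Cif P1 (CComp (Crun g m.+2) (P0 :: CComp Cpred [:: P1] :: Cprojs 2 m.+1)) CZero)
      else CZero
  | CMu f =>
      CComp Cpred [:: CComp (CPrim CZero (Cmu_step (Crun f n.+1) n)) (CProj n :: Cprojs 0 n.+1)]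
  end.

Definition run_enc f n (v : seq nat) := enc_opt (run (nth 0 v n) f (take n v)).

Lemma evals_rcons cs c v ws w :
  evals cs v ws -> eval c v w -> evals (rcons cs c) v (rcons ws w).
Proof.
elim=> [v' | g gs v' w' ws' ev_g _ IH] ev_c /=; first exact: evs_cons ev_c (evs_nil _).
exact: evs_cons ev_g (IH ev_c).
Qed.

Lemma evals_map (h : code -> code) (F : code -> seq nat -> nat) gs n v :
  all_prop (fun g => computes (h g) n (F g)) gs -> size v = n ->
  evals (map h gs) v (map (F^~ v) gs).
Proof.
elim: gs => [|g gs IHgs] /= => [_ _ | [cg cgs] sv]; first exact: evs_nil.
exact: evs_cons (cg _ sv) (IHgs cgs sv).
Qed.

Lemma map_nth_iota_cat (p s : seq nat) : [seq nth 0 (p ++ s) i | i <- iota (size p) (size s)] = s.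
Proof.
elim: s p => [|x s IHs] p //=.
rewrite nth_cat ltnn subnn /= -cat_rcons.
by have := IHs (rcons p x); rewrite size_rcons => ->.
Qed.

Lemma evals_Cprojs p s : evals (Cprojs (size p) (size s)) (p ++ s) s.
Proof.
rewrite -[in X in evals _ _ X](map_nth_iota_cat p s).
have : size p + size s <= size (p ++ s) by rewrite size_cat.
elim: (size s) (size p) => [|b IHb] a /= le_ab; first exact: evs_nil.
by apply: evs_cons; [apply: ev_proj | apply: IHb]; lia.
Qed.

Lemma computes_guard (h : code -> code) (F : code -> seq nat -> nat) gs final n G :
  all_prop (fun g => computes (h g) n (F g)) gs -> computes final n G ->
  computes (Cguard (map h gs) final) n (fun v => if all (fun g => F g v != 0) gs then G v else 0).
Proof.
elim: gs => [|g gs IHgs] //= [cg cgs] cfinal.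
have := computes_if cg (IHgs cgs cfinal) (@computes_const 0 n).
by apply: computes_ext => v _; case: (F g v != 0).
Qed.

Lemma primrec_enc_opt (F G : seq nat -> nat) (Fo Go : seq nat -> option nat) v v' x :
  F v = enc_opt (Fo v') ->
  (forall y x', G (x' :: y :: v) = if y != 0 then enc_opt (Go (x' :: y.-1 :: v')) else 0) ->
  primrec F G x v = enc_opt (primrec_opt Fo Go x v').
Proof.
move=> FE GE; elim: x => [|x IHx] //=.
by rewrite GE IHx; case: (primrec_opt _ _ _ _).
Qed.

Lemma primrec_mu_scan (G : seq nat -> nat) (R : nat -> option nat) v j :
  (forall j s, G (j :: s :: v) =
     if s != 0 then s else match R j with None => 1 | Some 0 => j.+2 | Some _ => 0 end) ->
  primrec (fun=> 0) G j v = mu_scan R j.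
Proof. by move=> GE; elim: j => [|j IHj] //=; rewrite GE IHj. Qed.

Lemma computes_run_comp f gs n :
  (forall m, computes (Crun f m) m.+1 (run_enc f m)) ->
  all_prop (fun g => computes (Crun g n) n.+1 (run_enc g n)) gs ->
  computes (Crun (CComp f gs) n) n.+1 (run_enc (CComp f gs) n).
Proof.
move=> cf cgs /=.
have args v : size v = n.+1 ->
    evals (rcons (map (fun g => CComp Cpred [:: Crun g n]) gs) (CProj n)) v
      (rcons (map (fun g => (run_enc g n v).-1) gs) (nth 0 v n)) /\
    size (rcons (map (fun g => (run_enc g n v).-1) gs) (nth 0 v n)) = (size gs).+1.
  move=> sv; split; last by rewrite size_rcons size_map.
  apply: evals_rcons; last by apply: ev_proj; rewrite sv.
  apply: (evals_map (F := fun g v => (run_enc g n v).-1)) sv.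
  by apply: all_prop_impl cgs => g /(computes_app1 computes_pred).
have := computes_guard cgs (computes_comp (cf (size gs)) args).
apply: computes_ext => v sv; rewrite /run_enc /= all_map.
rewrite (eq_all (a2 := preim (fun g => run (nth 0 v n) g (take n v)) isSome)); last first.
  by move=> g /=; case: (run _ _ _).
case: ifP => // _; rewrite nth_rcons size_map ltnn eqxx -cats1 take_size_cat ?size_map //.
by congr (enc_opt (run _ _ _)); rewrite -map_comp; apply: eq_map => g /=; case: (run _ _ _).
Qed.

Lemma computes_run_prim f g n :
  (forall m, computes (Crun f m) m.+1 (run_enc f m)) ->
  (forall m, computes (Crun g m) m.+1 (run_enc g m)) ->
  computes (Crun (CPrim f g) n) n.+1 (run_enc (CPrim f g) n).
Proof.
move=> cf cg; case: n => [|m] /=.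
  by apply: computes_ext (@computes_const 0 1) => v sv; rewrite /run_enc take0.
have args w : size w = m.+3 ->
    evals (P0 :: CComp Cpred [:: P1] :: Cprojs 2 m.+1) w
      (arg w 0 :: (arg w 1).-1 :: drop 2 w) /\
    size (arg w 0 :: (arg w 1).-1 :: drop 2 w) = m.+3.
  case: w => [|x [|y w]] // [sw]; split; last by rewrite /= drop0 sw.
  apply: evs_cons; first by apply: (computes_proj (isT : 0 < m.+3)); rewrite /= sw.
  apply: evs_cons.
    by apply: (computes_app1 computes_pred (computes_proj (isT : 1 < m.+3))); rewrite /= sw.
  by rewrite [drop 2 _]/= drop0 -sw; apply: (evals_Cprojs [:: x; y]).
have step := computes_if (computes_proj (isT : 1 < m.+3)) (computes_comp (cg m.+2) args)
  (@computes_const 0 m.+3).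
apply: computes_ext (computes_prim (cf m) step) => -[|x v] // [sv].
apply: primrec_enc_opt => // y x'.
by rewrite /arg /= drop0; case: y.
Qed.

Lemma computes_run_mu f n :
  (forall m, computes (Crun f m) m.+1 (run_enc f m)) ->
  computes (Crun (CMu f) n) n.+1 (run_enc (CMu f) n).
Proof.
move=> cf /=.
have args w : size w = n.+3 ->
    evals (P0 :: Cprojs 2 n.+1) w (arg w 0 :: drop 2 w) /\ size (arg w 0 :: drop 2 w) = n.+2.
  case: w => [|x [|y w]] // [sw]; split; last by rewrite /= drop0 sw.
  apply: evs_cons; first by apply: (computes_proj (isT : 0 < n.+3)); rewrite /= sw.
  by rewrite [drop 2 _]/= drop0 -sw; apply: (evals_Cprojs [:: x; y]).
have o := computes_comp (cf n.+1) args.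
have step := computes_if (computes_proj (isT : 1 < n.+3)) (computes_proj (isT : 1 < n.+3))
  (computes_if o (computes_if (computes_eqn o (@computes_const 1 n.+3))
     (computes_succ (computes_succ (computes_proj (isT : 0 < n.+3)))) (@computes_const 0 n.+3))
   (@computes_const 1 n.+3)).
have args2 v : size v = n.+1 ->
    evals (CProj n :: Cprojs 0 n.+1) v (nth 0 v n :: v) /\ size (nth 0 v n :: v) = n.+2.
  move=> sv; split; last by rewrite /= sv.
  apply: evs_cons; first by apply: ev_proj; rewrite sv.
  by rewrite -sv; apply: (evals_Cprojs [::]).
apply: computes_ext (computes_app1 computes_pred
  (computes_comp (computes_prim (@computes_const 0 n.+1) step) args2)) => v sv.
rewrite /run_enc /= (@primrec_mu_scan _ (fun j => run (nth 0 v n) f (j :: take n v))).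
  by case: (mu_scan _ _) => [|[|z]].
move=> j s; rewrite /arg /= drop0; case: (s != 0) => //.
by rewrite /run_enc /=; case: (run _ f _) => [[|y]|].
Qed.

Theorem computes_run f n : computes (Crun f n) n.+1 (run_enc f n).
Proof.
elim/code_nested_ind: f n.
- by move=> n; apply: computes_ext (@computes_const 1 n.+1).
- move=> [|m] /=; first by apply: computes_ext (@computes_const 0 1) => v _; rewrite /run_enc take0.
  apply: computes_ext (computes_succ (computes_succ (computes_proj (ltn0Sn m.+1)))).
  by move=> [|x v].
- move=> i n /=; case: ifP => lt_in.
    apply: computes_ext (computes_succ (computes_proj (ltnW lt_in : i < n.+1))) => v sv.
    by rewrite /run_enc /= size_take sv ltnSn lt_in nth_take.
  apply: computes_ext (@computes_const 0 n.+1) => v sv.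
  by rewrite /run_enc /= size_take sv ltnSn lt_in.
- move=> f gs IHf IHgs n; apply: computes_run_comp => //.
  by apply: all_prop_impl IHgs => g; apply.
- by move=> f g IHf IHg n; apply: computes_run_prim.
- by move=> f IHf n; apply: computes_run_mu.
Qed.

(** * The free group and its balls *)

Section FreeGroup.
Variable k : nat.
Implicit Types (a b : letter k) (s t u v w x y z : seq (letter k)).

Definition flip a : letter k := (a.1, ~~ a.2).

Lemma flipK : involutive flip.
Proof. by case=> i x; rewrite /flip /= negbK. Qed.

Lemma cancelp_flip a b : cancelp a b -> b = flip a.
Proof.
by case: a b => [i x] [j y]; rewrite /cancelp /flip /= => /andP [/eqP <-]; case: x; case: y.
Qed.

Lemma cancelp_flipr a : cancelp a (flip a).
Proof. by rewrite /cancelp /= eqxx; case: a.2. Qed.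

Lemma reduced_cons a s :
  reduced (a :: s) = (if s is b :: _ then ~~ cancelp a b else true) && reduced s.
Proof. by rewrite /reduced /=; case: s => //= b s. Qed.

Lemma reduced_behead a s : reduced (a :: s) -> reduced s.
Proof. by rewrite reduced_cons => /andP []. Qed.

Lemma push_reduced a s : reduced s -> reduced (push a s).
Proof.
case: s => [|b s] // red_bs /=; case: ifP => [_ | not_ab]; first exact: reduced_behead red_bs.
by rewrite reduced_cons not_ab red_bs.
Qed.

Lemma push_flip a t : reduced t -> push a (push (flip a) t) = t.
Proof.
case: t => [|b t] red_t /=; first by rewrite cancelp_flipr.
case: ifP => [/cancelp_flip | _] /=; last by rewrite cancelp_flipr.
rewrite flipK => eq_ba; subst b; case: t red_t => [|c t] //.
by rewrite reduced_cons => /andP [/negbTE /= -> _].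
Qed.

Lemma foldr_push_reduced t s : reduced t -> reduced (foldr (@push k) t s).
Proof. by move=> red_t; elim: s => //= a s; apply: push_reduced. Qed.

Lemma freduce_reduced s : reduced (freduce s).
Proof. exact: foldr_push_reduced. Qed.

Lemma push_foldr a s t : reduced t ->
  foldr (@push k) t (push a s) = push a (foldr (@push k) t s).
Proof.
move=> red_t; case: s => [|b s] //=; case: ifP => // /cancelp_flip ->.
by rewrite push_flip //; apply: foldr_push_reduced.
Qed.

Lemma foldr_freduce t s : reduced t -> foldr (@push k) t (freduce s) = foldr (@push k) t s.
Proof. by move=> red_t; elim: s => //= a s IHs; rewrite push_foldr // IHs. Qed.

Lemma freduce_id s : reduced s -> freduce s = s.
Proof.
elim: s => // a s IHs red_as /=; rewrite IHs ?(reduced_behead red_as) //.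
by case: s red_as {IHs} => // b s; rewrite reduced_cons => /andP [/negbTE /= ->].
Qed.

Lemma fmulE v w : reduced w -> fmul v w = foldr (@push k) w v.
Proof. by move=> red_w; rewrite /fmul /freduce foldr_cat -/(freduce w) freduce_id. Qed.

Lemma fmul_reduced v w : reduced (fmul v w).
Proof. exact: freduce_reduced. Qed.

Lemma fmulA x y z : fmul (fmul x y) z = fmul x (fmul y z).
Proof.
rewrite /fmul {1}/freduce foldr_cat -/(freduce z) foldr_freduce ?freduce_reduced //.
rewrite foldr_cat {2}/freduce foldr_cat -/(freduce z).
rewrite -/(freduce (freduce (y ++ z))) (freduce_id (freduce_reduced (y ++ z))).
by rewrite /freduce foldr_cat.
Qed.

Definition finv s := rev (map flip s).

Lemma finvK : involutive finv.
Proof. by move=> s; rewrite /finv map_rev revK -map_comp map_id_in // => a _; rewrite /= flipK. Qed.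

Lemma foldr_push_finv s t : reduced t ->
  foldr (@push k) (foldr (@push k) t s) (finv s) = t.
Proof.
elim: s t => //= a s IHs t red_t.
rewrite /finv map_cons rev_cons -cats1 foldr_cat /=.
by have := push_flip (flip a) (foldr_push_reduced s red_t); rewrite flipK => ->; apply: IHs.
Qed.

Lemma fmulI u v w : reduced v -> reduced w -> fmul u v = fmul u w -> v = w.
Proof.
move=> red_v red_w; rewrite !fmulE // => eq_uvw.
by rewrite -(foldr_push_finv u red_v) eq_uvw foldr_push_finv.
Qed.

Lemma fmulV w : reduced w -> fmul w (finv w) = [::].
Proof.
move=> red_w; rewrite /fmul /freduce foldr_cat.
by have := foldr_push_finv (finv w) (isT : reduced [::]); rewrite finvK.
Qed.

Lemma fmulIr w x y : reduced w -> reduced x -> reduced y -> fmul x w = fmul y w -> x = y.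
Proof.
move=> red_w red_x red_y eq_xyw.
have fmul_nilr s : fmul s [::] = freduce s by rewrite /fmul cats0.
by rewrite -(freduce_id red_x) -(freduce_id red_y) -!fmul_nilr -(fmulV red_w) -!fmulA eq_xyw.
Qed.

Lemma size_push a s : size (push a s) <= (size s).+1.
Proof. by case: s => //= b s; case: ifP => //= _; lia. Qed.

Lemma size_foldr_push t s : size (foldr (@push k) t s) <= size s + size t.
Proof. by elim: s => //= a s IHs; apply: leq_trans (size_push _ _) _; lia. Qed.

Lemma mem_words m s : (s \in words_of_len k m) = (size s == m).
Proof.
elim: m s => [|m IHm] s; first by rewrite /= mem_seq1; case: s.
rewrite /words_of_len iterS -/(words_of_len k m); apply/allpairsP/eqP.
  by move=> [[a s'] [_ /= s's ->]]; rewrite /= (eqP (etrans (esym (IHm s')) s's)).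
case: s => [|a s] //= [size_s]; exists (a, s); split=> //=; first by rewrite mem_enum.
by rewrite IHm size_s.
Qed.

Lemma uniq_words m : uniq (words_of_len k m).
Proof.
elim: m => [|m IHm] //; rewrite /words_of_len iterS -/(words_of_len k m).
apply: allpairs_uniq => //; first exact: enum_uniq.
by move=> [a s] [a' s'] _ _ /= [-> ->].
Qed.

Lemma mem_words_upto n s :
  (s \in flatten [seq words_of_len k m | m <- iota 0 n.+1]) = (size s <= n).
Proof.
apply/flattenP/idP => [[L /mapP [m m_n ->]] | le_sn].
  by rewrite mem_words => /eqP ->; move: m_n; rewrite mem_iota.
exists (words_of_len k (size s)); last by rewrite mem_words.
by apply: map_f; rewrite mem_iota.
Qed.

Lemma mem_ball n s : (s \in ball k n) = reduced s && (size s <= n).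
Proof. by rewrite /ball mem_filter mem_words_upto. Qed.

Lemma uniq_ball n : uniq (ball k n).
Proof.
apply: filter_uniq; elim: n => [|n IHn] //.
rewrite -[n.+2]addn1 iotaD map_cat flatten_cat cat_uniq IHn add0n.
have -> : flatten [seq words_of_len k m | m <- iota n.+1 1] = words_of_len k n.+1.
  by rewrite /= cats0.
rewrite uniq_words andbT; apply/hasPn => s; rewrite mem_words => /eqP size_s.
by rewrite mem_words_upto size_s ltnn.
Qed.

Lemma size_ball_gt0 n : 0 < size (ball k n).
Proof.
have : [::] \in ball k n by rewrite mem_ball.
by case: (ball k n).
Qed.

Lemma size_ballS m : size (ball k m.+1) <= (k.*2).+1 * size (ball k m).
Proof.
have -> : (k.*2).+1 * size (ball k m) =
    size (ball k m ++ [seq a :: s | a <- enum {: letter k}, s <- ball k m]).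
  by rewrite size_cat size_allpairs -cardE card_prod card_ord card_bool; lia.
apply: uniq_leq_size (uniq_ball _) _ => s; rewrite mem_cat !mem_ball => /andP [red_s le_s].
case: (leqP (size s) m) => [_ | lt_ms]; first by rewrite red_s.
case: s red_s le_s lt_ms => [|a s] // red_as le_s lt_ms; apply/orP; right.
apply: allpairs_f; first by rewrite mem_enum.
by rewrite mem_ball (reduced_behead red_as) -ltnS.
Qed.

Lemma size_ball_add m j : size (ball k (m + j)) <= (k.*2).+1 ^ j * size (ball k m).
Proof.
elim: j => [|j IHj]; first by rewrite addn0 mul1n.
rewrite addnS; apply: leq_trans (size_ballS _) _.
by rewrite expnS -mulnA leq_mul2l IHj orbT.
Qed.

End FreeGroup.

(** * Translates of balls and UB-generic sets *)

Lemma count_le_subset (T : eqType) (p : pred T) (s1 s2 : seq T) :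
  uniq s1 -> {subset s1 <= s2} -> count p s1 <= count p s2.
Proof.
move=> uniq_s1 sub12; rewrite -!size_filter; apply: uniq_leq_size; first exact: filter_uniq.
by move=> x; rewrite !mem_filter => /andP [-> /sub12].
Qed.

Section Translates.
Import GRing.Theory Num.Theory.
Variable k : nat.
Implicit Types (S : pred (seq (letter k))) (u w x : seq (letter k)).

Lemma tballP u n x :
  reflect (exists2 b, reduced b /\ size b <= n & x = fmul u b) (x \in tball u n).
Proof.
rewrite mem_undup; apply: (iffP mapP) => -[b].
  by rewrite mem_ball => /andP ? ->; exists b.
by move=> ? ->; exists b => //; rewrite mem_ball; apply/andP.
Qed.

Lemma tball_reduced u n x : x \in tball u n -> reduced x.
Proof. by case/tballP=> b _ ->; apply: fmul_reduced. Qed.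

Lemma size_tball u n : reduced u -> size (tball u n) = size (ball k n).
Proof.
move=> red_u; rewrite /tball undup_id ?size_map // map_inj_in_uniq ?uniq_ball //.
by move=> b b'; rewrite !mem_ball => /andP [red_b _] /andP [red_b' _]; apply: fmulI.
Qed.

Lemma tball_fmulr u w n x :
  size w <= n -> x \in tball u (n - size w) -> fmul x w \in tball u n.
Proof.
move=> le_wn /tballP [b [red_b le_b] ->]; apply/tballP; exists (fmul b w); last by rewrite fmulA.
split; first exact: fmul_reduced.
rewrite /fmul /freduce; apply: leq_trans (size_foldr_push _ _) _; rewrite size_cat /=; lia.
Qed.

Lemma tball_subset u m n : m <= n -> {subset tball u m <= tball u n}.
Proof.
by move=> le_mn x /tballP [b [red_b le_b] ->]; apply/tballP; exists b => //; split; last lia.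
Qed.

Lemma count_bad_translates S u w n : reduced w -> size w <= n ->
  count (fun x => ~~ S x || ~~ S (fmul x w)) (tball u (n - size w)) <=
  (count (predC S) (tball u n)).*2.
Proof.
move=> red_w le_wn; set L := tball u (n - size w).
apply: leq_trans
  (_ : _ <= count (predC S) L + count (fun x : seq (letter k) => ~~ S (fmul x w)) L) _.
  by rewrite -count_predUI leq_addr.
rewrite -addnn; apply: leq_add.
  by apply: count_le_subset; [apply: undup_uniq | apply: tball_subset; lia].
rewrite -[X in X <= _](count_map (fun x => fmul x w) (predC S)).
apply: count_le_subset => [|_ /mapP [x Lx ->]]; last exact: tball_fmulr.
rewrite map_inj_in_uniq ?undup_uniq // => x x' Lx Lx'.
exact: fmulIr red_w (tball_reduced Lx) (tball_reduced Lx').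
Qed.

Lemma size_ball_le_tball u w n : reduced u -> size w <= n ->
  size (ball k n) <= (k.*2).+1 ^ size w * size (tball u (n - size w)).
Proof. by move=> red_u le_wn; rewrite size_tball // -{1}(subnK le_wn) size_ball_add. Qed.

Lemma density_complement_lt S u n K : reduced u -> 0 < K ->
  (1 - (K%:R)^-1 < density S u n)%R ->
  K * (size (ball k n) - count S (tball u n)) < size (ball k n).
Proof.
move=> red_u K_gt0; rewrite /density ltr_pdivlMr ?ltr0n ?size_ball_gt0 // => dens.
have le_cB : count S (tball u n) <= size (ball k n) by rewrite -(size_tball n red_u) count_size.
rewrite -(ltr_nat rat) natrM natrB //.
have K_pos : (0 < K%:R :> rat)%R by rewrite ltr0n.
by rewrite -(ltr_pM2l K_pos) mulrA mulrBr mulr1 mulfV ?gt_eqF // in dens; lra.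
Qed.

Theorem UB_generic_pair S : UB_generic S ->
  forall w, reduced w -> exists v, [/\ reduced v, S v & S (fmul v w)].
Proof.
move=> genS w red_w; set C := (k.*2).+1 ^ size w.
have C2_gt0 : 0 < 2 * C by rewrite muln_gt0 expn_gt0.
have [|n [le_wn [u [red_u dens]]]] := genS ((2 * C)%:R^-1)%R _ (size w).
  by rewrite invr_gt0 ltr0n.
set L := tball u (n - size w).
have [/hasP [x Lx /andP [Sx Sxw]] | /hasPn good] := boolP (has (fun x => S x && S (fmul x w)) L).
  by exists x; split=> //; apply: tball_reduced Lx.
have all_bad : count (fun x => ~~ S x || ~~ S (fmul x w)) L = size L.
  by rewrite -[RHS]count_predT; apply: eq_in_count => x /good; rewrite negb_and.
have := count_bad_translates S u red_w le_wn.
rewrite all_bad -[count (predC S) _](addKn (count S (tball u n))) count_predC.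
have := size_ball_le_tball red_u le_wn.
have := density_complement_lt red_u C2_gt0 dens.
(* |B_n| <= C |L| <= 2 C |uB_n \ S| < |B_n| *)
rewrite -/L size_tball //; nia.
Qed.

End Translates.

Section GroupWords.
Variables (G : Type) (mul : G -> G -> G) (inv : G -> G) (one : G).
Hypothesis group_G : is_group mul inv one.
Variables (k : nat) (gen : 'I_k -> G).
Local Notation pi := (evalw mul inv one gen).

Lemma mulgV x : mul x (inv x) = one.
Proof.
have [mulA [mul1g mulVg]] := group_G.
have idem : mul (mul x (inv x)) (mul x (inv x)) = mul x (inv x).
  by rewrite -mulA (mulA (inv x)) mulVg mul1g.
by rewrite -(mulVg (mul x (inv x))) -{3}idem mulA mulVg mul1g.
Qed.

Lemma mulgI x : injective (mul x).
Proof.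
have [mulA [mul1g mulVg]] := group_G.
by move=> a b eq_ab; rewrite -(mul1g a) -(mul1g b) -(mulVg x) -!mulA eq_ab.
Qed.

Lemma evalw_push a s : pi (push a s) = pi (a :: s).
Proof.
case: s => [|b s] //=; case: ifP => // /cancelp_flip ->.
have [mulA [mul1g mulVg]] := group_G.
by rewrite mulA /=; case: a.2; rewrite /= ?mulVg ?mulgV mul1g.
Qed.

Lemma evalw_foldr_push t s : pi (foldr (@push k) t s) = mul (pi s) (pi t).
Proof.
have [mulA [mul1g _]] := group_G.
by elim: s => [|a s IHs] /=; rewrite ?mul1g // evalw_push /= IHs mulA.
Qed.

Lemma evalw_foldr_push_eq t s :
  pi (foldr (@push k) [::] s) = pi (foldr (@push k) t s) <-> pi t = one.
Proof. by rewrite !evalw_foldr_push; split => [/mulgI <- | ->]. Qed.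

End GroupWords.

(** * Solving the word problem by search *)

Definition Csearch (g : code) : code :=
  CComp Cpred [:: CComp g [:: CMu (CComp Ceq0 [:: g]); P0]].

Lemma eval_search g F e : computes2 g F -> (exists m, F m e != 0) ->
  exists m, F m e != 0 /\ eval (Csearch g) [:: e] (F m e).-1.
Proof.
move=> cg ex_m; have [y Fy min_y] := ex_minnP ex_m; exists y; split => //; rewrite /Csearch.
have cQ := computes_app1 computes_eq0 cg.
apply: ev_comp (evs_cons _ (evs_nil _)) (@computes_pred [:: F y e] erefl).
apply: ev_comp (cg [:: y; e] erefl).
apply: evs_cons (evs_cons (@ev_proj 0 [:: e] isT) (evs_nil _)).
apply: ev_mu; first by have := cQ [:: y; e] erefl; rewrite /arg /= (negbTE Fy).
move=> z lt_zy; exists 0.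
have Fz0 : F z e == 0 by apply: contraTT lt_zy => /min_y; rewrite -leqNgt.
by have := cQ [:: z; e] erefl; rewrite /arg /= Fz0.
Qed.

(* [trial c k m e] runs [c] for [unpair2 m] steps on the pair of words [(s, s * w)], where [s] is
   the word read off [unpair1 m] and [e] encodes [w]. *)
Definition trial c k m e :=
  let r := unpair1 m in
  enc_opt (run (unpair2 m) c [:: fredN (letter_bound k) r r 0; fredN (letter_bound k) r r e]).

Definition Ctrial c k :=
  let Cr := CComp Cunpair1 [:: P0] in
  CComp (Crun c 2) [:: CComp (Cfred (letter_bound k)) [:: Cr; Cr; Cconst 0];
                       CComp (Cfred (letter_bound k)) [:: Cr; Cr; P1]; CComp Cunpair2 [:: P0]].

Lemma computes_trial c k : computes2 (Ctrial c k) (trial c k).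
Proof.
have crun : computes3 (Crun c 2) (fun x y z => run_enc c 2 [:: x; y; z]).
  by rewrite /computes3; apply: computes_ext (@computes_run c 2) => -[|x [|y [|z []]]].
have cr := computes_app1 computes_unpair1 (computes_proj (isT : 0 < 2)).
exact: computes_app3 crun (computes_app3 (computes_fred _) cr cr (@computes_const 0 2))
  (computes_app3 (computes_fred _) cr cr (computes_proj (isT : 1 < 2)))
  (computes_app1 computes_unpair2 (computes_proj (isT : 0 < 2))).
Qed.

Lemma trial_complete c k (s w : seq (letter k)) y :
  eval c [:: enc_word (freduce s); enc_word (foldr (@push k) w s)] y ->
  exists m, trial c k m (enc_word w) = y.+1.
Proof.
move=> /eval_run_eventually [t0 run_t0].
exists (cpair (enc_list (rev (map (@enc_letter k) s))) t0).
rewrite /trial unpair1_cpair unpair2_cpair -[0]/(enc_word (@nil (letter k))) !fredN_enc_word.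
by rewrite run_t0.
Qed.

Lemma trial_sound c k m (w : seq (letter k.+1)) y :
  trial c k.+1 m (enc_word w) = y.+1 ->
  exists s, eval c [:: enc_word (freduce s); enc_word (foldr (@push _) w s)] y.
Proof.
have [s fred_s] := fredN_dec k (unpair1 m).
rewrite /trial -[0]/(enc_word (@nil (letter k.+1))) !fred_s.
by case run_s: (run _ _ _) => [z|] // [<-]; exists s; apply: run_sound run_s.
Qed.

Lemma solvable_WP_rank0 (G : Type) (mul : G -> G -> G) (inv : G -> G) (one : G)
  (gen : 'I_0 -> G) : solvable_WP mul inv one gen.
Proof.
exists (Cconst 1) => -[|[[]]] // _.
by split=> // _; apply: computes_const.
Qed.

Theorem theorem2p9 (k : nat) (G : Type) (mul : G -> G -> G) (inv : G -> G) (one : G)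
  (gen : 'I_k -> G)
  (Hgrp : is_group mul inv one) (Hgen : generates mul inv one gen)
  (S : pred (seq (letter k)))
  (HS : UB_generic S)
  (HEq : solvable_EqP_on mul inv one gen (fun w1 w2 => S w1 /\ S w2)) :
  solvable_WP mul inv one gen.
Proof.
(* The search below never needs [Hgen]: it only manipulates words. *)
case: k gen Hgen S HS HEq => [|k] gen _ S HS [c [halts correct]].
  exact: solvable_WP_rank0.
exists (Csearch (Ctrial c k.+1)) => w red_w.
have hit : exists m, trial c k.+1 m (enc_word w) != 0.
  have [v [red_v Sv Svw]] := UB_generic_pair HS red_w.
  have [y] := halts v (fmul v w) red_v (fmul_reduced v w) (conj Sv Svw).
  rewrite -{1}(freduce_id red_v) fmulE // => /trial_complete [m trial_m].
  by exists m; rewrite trial_m.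
have [m [+ ev_search]] := eval_search (computes_trial c k.+1) hit.
case trial_m: (trial c k.+1 m (enc_word w)) ev_search => [|b] //= ev_b _.
have [s ev_s] := trial_sound trial_m.
have [eq_one neq_one] := correct _ _ _ (freduce_reduced s) (foldr_push_reduced s red_w) ev_s.
rewrite !(evalw_foldr_push_eq Hgrp) in eq_one neq_one.
by split=> [/eq_one | /neq_one] <-.
Qed.
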